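(* Let $\varphi\colon \mathbb{R}^n\to\overline{\mathbb{R}}$ be a proper nearly convex function and $\varepsilon\geq 0$. Then for every $\bar x\in \mathrm{ri}(\mathrm{dom}\, \varphi)$, the set $\partial_\varepsilon \varphi(\bar x)$ is nonempty, closed and convex. Furthermore, $$\partial \varphi(\bar x)=\bigcap_{\varepsilon>0} \partial_\varepsilon \varphi(\bar x).$$
   Context: $\overline{\mathbb{R}}=[-\infty,\infty]$; $\varphi$ is proper if $\mathrm{dom}\,\varphi=\{x\mid\varphi(x)<\infty\}\ne\emptyset$ and $\varphi(x)>-\infty$ for all $x$. A set $D$ is nearly convex if there is a convex set $E$ with $E\subset D\subset\overline{E}$; $\varphi$ is nearly convex if $\mathrm{epi}\,\varphi=\{(x,\alpha)\in\mathbb{R}^n\times\mathbb{R}\mid\alpha\ge\varphi(x)\}$ is nearly convex. The relative interior is $\mathrm{ri}\,D=\{a\in D\mid \exists\delta>0,\ B(a;\delta)\cap\mathrm{aff}\,D\subset D\}$. For $\varepsilon\ge0$ and $\bar x\in\mathrm{dom}\,\varphi$, $\partial_\varepsilon\varphi(\bar x)=\{\xi\in\mathbb{R}^n\mid \langle\xi,x-\bar x\rangle-\varepsilon\le\varphi(x)-\varphi(\bar x)\ \forall x\in\mathbb{R}^n\}$, and $\partial\varphi(\bar x)=\partial_0\varphi(\bar x)$. *)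

From HB Require Import structures.
From mathcomp Require Import all_boot all_order all_algebra.
From mathcomp Require Import all_classical all_reals all_analysis.
Set Implicit Arguments. Unset Strict Implicit. Unset Printing Implicit Defensive.
Import Order.TTheory GRing.Theory Num.Theory.
Import numFieldNormedType.Exports.
Local Open Scope classical_set_scope.
Local Open Scope ring_scope.

Section Defs.
Variables (R : realType) (n : nat).

Definition dotv (u v : 'rV[R]_n) : R := \sum_(i < n) u ord0 i * v ord0 i.

Definition enorm (u : 'rV[R]_n) : R := Num.sqrt (dotv u u).
Definition eball (a : 'rV[R]_n) (delta : R) : set 'rV[R]_n :=
  [set x | enorm (x - a) < delta].

Definition aff (D : set 'rV[R]_n) : set 'rV[R]_n :=
  [set x | exists (k : nat) (c : 'I_k -> R) (p : 'I_k -> 'rV[R]_n),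
     (forall i, D (p i)) /\ \sum_(i < k) c i = 1 /\ x = \sum_(i < k) c i *: p i].

Definition ri (D : set 'rV[R]_n) : set 'rV[R]_n :=
  [set a | D a /\ exists delta : R, 0 < delta /\ (eball a delta `&` aff D `<=` D)].

Definition dom (phi : 'rV[R]_n -> \bar R) : set 'rV[R]_n :=
  [set x | (phi x < +oo)%E].
Definition proper_fun (phi : 'rV[R]_n -> \bar R) : Prop :=
  dom phi !=set0 /\ forall x, (-oo < phi x)%E.
Definition epi (phi : 'rV[R]_n -> \bar R) : set ('rV[R]_n * R) :=
  [set p | (phi p.1 <= (p.2)%:E)%E].

Definition nearly_convex_set (D : set ('rV[R]_n * R)) : Prop :=
  exists E : set ('rV[R]_n * R), convex_set E /\ E `<=` D /\ D `<=` closure E.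
Definition nearly_convex_fun (phi : 'rV[R]_n -> \bar R) : Prop :=
  nearly_convex_set (epi phi).

(* epsilon-subdifferential and subdifferential (meaningful for xbar in dom phi) *)
Definition esubdiff (phi : 'rV[R]_n -> \bar R) (eps : R) (xbar : 'rV[R]_n)
  : set 'rV[R]_n :=
  [set xi | forall x : 'rV[R]_n,
     ((dotv xi (x - xbar) - eps)%:E <= phi x - phi xbar)%E].
Definition subdiff (phi : 'rV[R]_n -> \bar R) (xbar : 'rV[R]_n) : set 'rV[R]_n :=
  esubdiff phi 0 xbar.

End Defs.

(* Fix a convex set E with E ⊆ epi φ ⊆ cl E.  The projection P of E onto the
   x-coordinates is convex and dense in dom φ.  As x̄ ∈ ri (dom φ), dom φ
   contains a box around x̄ spanned by directions of dom φ - x̄; by density and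
   convexity P contains a smaller such box, since near its corners P meets
   every closed orthant.  Hence from every point of P one can step beyond x̄
   and stay in P, which is exactly what the one-dimensional Hahn–Banach step
   needs: a slope between the left and the right difference quotients of E
   along a coordinate extends a subgradient of E at (x̄, φ x̄) by one more
   coordinate.  The resulting affine minorant of E passes to epi φ because
   closed half-spaces containing E contain its closure.  Closedness, convexity
   and the intersection formula only use that the ε-subgradient inequality is
   affine in ξ and in ε. *)

From HB Require Import structures.
From mathcomp Require Import all_boot all_order all_algebra.
From mathcomp Require Import all_classical all_reals all_analysis.
From mathcomp Require Import ring lra.
Import Order.TTheory GRing.Theory Num.Theory.
Import numFieldNormedType.Exports.
Local Open Scope classical_set_scope.
Local Open Scope ring_scope.
Set Implicit Arguments.
Unset Strict Implicit.

Section ConvexSet.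
Variable R : realType.

Lemma convex_setP (V : lmodType R) (A : set V) :
  convex_set A <->
  forall x y (t : R), A x -> A y -> 0 <= t <= 1 -> A (t *: x + (1 - t) *: y).
Proof.
split => [cA x y t Ax Ay /andP[t0 t1] | cA x y l].
  by have := cA x y (Itv01 t0 t1); rewrite !in_setE; apply.
by rewrite !in_setE => Ax Ay; apply: cA => //; rewrite ge0 le1.
Qed.

Lemma convex_set_translate (V : lmodType R) (A : set V) (s : V) :
  convex_set A -> convex_set [set x | A (x + s)].
Proof.
move=> /convex_setP cA; apply/convex_setP => x y t Ax Ay t01 /=.
have -> : t *: x + (1 - t) *: y + s = t *: (x + s) + (1 - t) *: (y + s).
  by rewrite !scalerDr addrACA -scalerDl subrKC scale1r.
exact: cA.
Qed.

Lemma convex_set_linear_preimage (V W : lmodType R) (f : {linear V -> W})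
    (A : set W) :
  convex_set A -> convex_set [set x | A (f x)].
Proof.
move=> /convex_setP cA; apply/convex_setP => x y t Ax Ay t01 /=.
by rewrite linearD !linearZ; exact: cA.
Qed.

End ConvexSet.

Lemma separating_point (R : realType) (L U : set R) :
  (L !=set0 <-> U !=set0) -> (forall l u, L l -> U u -> l <= u) ->
  exists c, (forall l, L l -> l <= c) /\ (forall u, U u -> c <= u).
Proof.
move=> LU LleU; have [[l0 Ll0]|L0] := pselect (L !=set0).
  have [u0 Uu0] := LU.1 (ex_intro _ l0 Ll0).
  exists (sup L); split => [l Ll|u Uu].
    by apply: ub_le_sup => //; exists u0 => ? /LleU; apply.
  by apply: ge_sup => [|? /LleU]; [exists l0 | apply].
exists 0; split => [l Ll|u Uu]; first by case: L0; exists l.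
by case: L0; apply: LU.2; exists u.
Qed.

Section MxNorm.
Variable R : realType.

Lemma mx_norm_coord m k (M : 'M[R]_(m, k)) i j : `|M i j| <= `|M|.
Proof. by rewrite [leRHS]/Num.Def.normr /= mx_normrE; apply/bigmax_geP; right; exists (i, j). Qed.

Lemma mx_norm_le m k (M : 'M[R]_(m, k)) r :
  0 <= r -> (forall i j, `|M i j| <= r) -> `|M| <= r.
Proof.
move=> r0 Mr; rewrite [leLHS]/Num.Def.normr /= mx_normrE.
by apply/bigmax_leP; split => // -[i j] _; exact: Mr.
Qed.

Lemma mx_norm_mulmx_le k l (b : 'rV[R]_k) (M : 'M[R]_(k, l)) :
  `|b *m M| <= `|b| * \sum_i \sum_j `|M i j|.
Proof.
apply: mx_norm_le => [|i j]; first by apply/mulr_ge0/sumr_ge0 => // h _; exact: sumr_ge0.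
rewrite ord1 mxE mulr_sumr; apply: le_trans (ler_norm_sum _ _ _) _.
apply: ler_sum => h _; rewrite normrM ler_pM ?mx_norm_coord //.
by rewrite (bigD1 j) //= lerDl sumr_ge0.
Qed.

End MxNorm.

Section Dotv.
Variables (R : realType) (n : nat).
Implicit Types u v w : 'rV[R]_n.

Lemma dotvC u v : dotv u v = dotv v u.
Proof. by apply: eq_bigr => i _; rewrite mulrC. Qed.

Lemma dotvDr u v w : dotv u (v + w) = dotv u v + dotv u w.
Proof. by rewrite /dotv -big_split; apply: eq_bigr => i _; rewrite mxE mulrDr. Qed.

Lemma dotvZr u v a : dotv u (a *: v) = a * dotv u v.
Proof. by rewrite /dotv mulr_sumr; apply: eq_bigr => i _; rewrite mxE mulrCA. Qed.

Lemma dotvBr u v w : dotv u (v - w) = dotv u v - dotv u w.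
Proof. by rewrite dotvDr -scaleN1r dotvZr mulN1r. Qed.

Lemma dotvDl u v w : dotv (u + v) w = dotv u w + dotv v w.
Proof. by rewrite !(dotvC _ w) dotvDr. Qed.

Lemma dotvZl u v a : dotv (a *: u) v = a * dotv u v.
Proof. by rewrite !(dotvC _ v) dotvZr. Qed.

Lemma dotv0l v : dotv 0 v = 0.
Proof. by rewrite /dotv big1 // => i _; rewrite mxE mul0r. Qed.

Lemma dotv_deltal k v : dotv (delta_mx ord0 k) v = v ord0 k.
Proof.
rewrite /dotv (bigD1 k) //= big1 => [|i ik]; first by rewrite mxE !eqxx mul1r addr0.
by rewrite mxE (negbTE ik) andbF mul0r.
Qed.

Lemma continuous_dotv u : continuous (dotv u).
Proof.
apply: continuous_big => [|i _]; first exact: add_continuous.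
move=> v; apply: (@continuous_comp _ _ _ (fun v : 'rV[R]_n => v ord0 i) ( *%R (u ord0 i))).
  exact: coord_continuous.
exact: mulrl_continuous.
Qed.

Lemma closed_dotv_le u c : closed [set v | dotv u v <= c].
Proof.
by apply: (preimage_closed (f := dotv u) _ (@closed_le _ c)) => v _; exact: continuous_dotv.
Qed.

Lemma closed_dotv_fst_le u c : closed [set p : 'rV[R]_n * R | dotv u p.1 - p.2 <= c].
Proof.
apply: (preimage_closed (f := fun p : 'rV[R]_n * R => dotv u p.1 - p.2) _ (@closed_le _ c)).
move=> p _; apply: (@continuous_comp _ _ _ (fun p : 'rV[R]_n * R => (dotv u p.1, p.2))
  (fun z : R * R => z.1 - z.2)); last exact: sub_continuous.
have dotv_fst : dotv u x.1 @[x --> p] --> dotv u p.1.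
  by apply: continuous_comp; [exact: cvg_fst | exact: continuous_dotv].
exact: (cvg_pair dotv_fst cvg_snd).
Qed.

Lemma enorm_le_mx_norm v : enorm v <= n%:R * `|v|.
Proof.
have nv0 : 0 <= n%:R * `|v| by rewrite mulr_ge0.
rewrite /enorm -(ger0_norm nv0) -sqrtr_sqr ler_wsqrtr //.
apply: (@le_trans _ _ (\sum_(j < n) `|v| ^+ 2)).
  apply: ler_sum => j _; rewrite -expr2 -real_normK ?num_real //.
  by rewrite lerXn2r ?nnegrE // mx_norm_coord.
rewrite sumr_const card_ord -[_ *+ n]mulr_natl exprMn.
apply: ler_wpM2r; first exact: exprn_ge0.
rewrite -natrX ler_nat.
by case: n => // k; rewrite expnS leq_pmulr.
Qed.

End Dotv.

Lemma convex_comb_root (R : realType) (x y : R) :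
  y <= 0 <= x -> exists2 t, 0 <= t <= 1 & t * x + (1 - t) * y = 0.
Proof.
case/andP=> y0 x0; have [->|xn0] := eqVneq x 0.
  by exists 1; rewrite ?lexx ?ler01 // subrr mulr0 mul0r addr0.
have xy0 : 0 < x - y by rewrite subr_gt0 (le_lt_trans y0) // lt_def xn0.
exists (- y / (x - y)); last by field; rewrite gt_eqF.
by rewrite divr_ge0 ?oppr_ge0 ?(ltW xy0) //= ler_pdivrMr // mul1r; lra.
Qed.

Section Orthant.
Variables (R : realType) (m : nat) (C : set 'rV[R]_m).
Hypothesis C_convex : convex_set C.

Definition orthant_on (S : {set 'I_m}) (sg : 'I_m -> bool) (a : 'rV[R]_m) :=
  forall i, if i \in S then (if sg i then 0 <= a ord0 i else a ord0 i <= 0)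
            else a ord0 i == 0.

Definition meets_orthants_on S := forall sg, exists2 a, orthant_on S sg a & C a.

Lemma meets_orthants_onD1 (S : {set 'I_m}) j :
  j \in S -> meets_orthants_on S -> meets_orthants_on (S :\ j).
Proof.
move=> jS CS sg; pose sg_with b i := if i == j then b else sg i.
have [ap ap_orth Cap] := CS (sg_with true).
have [am am_orth Cam] := CS (sg_with false).
have [t /andP[t0 t1] tj] : exists2 t, 0 <= t <= 1 & t * ap ord0 j + (1 - t) * am ord0 j = 0.
  apply: convex_comb_root; move: (ap_orth j) (am_orth j).
  by rewrite jS /sg_with eqxx => -> ->.
exists (t *: ap + (1 - t) *: am); last by apply: (convex_setP C).1 => //; rewrite t0.
move=> i; rewrite !mxE in_setD1; have [->|ij] /= := eqVneq i j; first by rewrite tj.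
move: (ap_orth i) (am_orth i); rewrite /sg_with (negbTE ij).
case: (i \in S) => [|/eqP-> /eqP->]; last by rewrite !mulr0 addr0.
by case: (sg i) => api ami; nra.
Qed.

Lemma convex_orthants_mem0 : meets_orthants_on [set: 'I_m] -> C 0.
Proof.
move=> CT; suff /(_ (fun=> true)) [a a0] : meets_orthants_on finset.set0.
  by have -> : a = 0 by apply/rowP => i; move: (a0 i); rewrite finset.in_set0 mxE => /eqP.
suff CS S : meets_orthants_on S by [].
have [k] := ubnP #|~: S|; elim: k S => // k IH S; rewrite ltnS => cardS.
have [S1|[j jS]] := set_0Vmem (~: S).
  by have -> : S = [set: 'I_m]%SET by rewrite -(finset.setCK S) S1 finset.setC0.
have ltk : (#|~: (j |: S)| < k)%N.
  apply: leq_trans cardS.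
  by rewrite finset.setCU finset.setIC -finset.setDE proper_card // properD1.
have jS' : j \notin S by move: jS; rewrite inE.
by rewrite -(setU1K jS'); exact: meets_orthants_onD1 (setU11 j S) (IH _ ltk).
Qed.

End Orthant.

Section RowSpan.
Variables (R : realType) (n : nat).

Lemma exists_row_span (S : set 'rV[R]_n) :
  exists m (U : 'M[R]_(m, n)), (forall i, S (row i U)) /\ (forall s, S s -> (s <= U)%MS).
Proof.
apply: contrapT => noU.
suff [m [U [_ rkU]]] : exists m (U : 'M[R]_(m, n)), (forall i, S (row i U)) /\ (n < \rank U)%N.
  by move: (rank_leq_col U); rewrite leqNgt rkU.
elim: n.+1 => [|r [m [U [SU rkU]]]]; first by exists 0%N, 0; split => // -[].
have [s /not_implyP[Ss /negP sU]] : exists s, ~ (S s -> (s <= U)%MS).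
  by apply/existsNP => allU; apply: noU; exists m, U.
exists (m + 1)%N, (col_mx U s); split.
  move=> i; rewrite -(splitK i); case: (fintype.split i) => j /=.
    by rewrite rowKu.
  by rewrite rowKd row_id.
apply: leq_ltn_trans rkU _; rewrite (ltn_leqif (mxrank_leqif_sup _)).
  by apply: contra sU; apply: submx_trans; rewrite -addsmxE addsmxSr.
by rewrite -addsmxE addsmxSl.
Qed.

Lemma aff_add_mulmx m (D : set 'rV[R]_n) (t : 'rV[R]_n) (U : 'M[R]_(m, n)) (c : 'rV[R]_m) :
  D t -> (forall i, D (row i U + t)) -> aff D (t + c *m U).
Proof.
move=> Dt DU.
exists m.+1, (fun i => if unlift ord0 i is Some j then c ord0 j else 1 - \sum_j c ord0 j),
  (fun i => if unlift ord0 i is Some j then row j U + t else t).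
split; [by move=> i; case: (unlift ord0 i) | split]; rewrite big_ord_recl unlift_none.
  by under [X in _ + X]eq_bigr => i _ do rewrite liftK /=; rewrite subrK.
under [X in _ = _ + X]eq_bigr => i _ do rewrite liftK /= scalerDr.
rewrite big_split /= scalerBl scale1r -scaler_suml mulmx_sum_row.
by rewrite addrA addrAC subrK.
Qed.

End RowSpan.

Lemma closure_norm_approx (R : realType) (V : pseudoMetricNormedZmodType R)
    (A : set V) p e :
  0 < e -> closure A p -> exists2 q, A q & `|p - q| < e.
Proof.
move=> e0 /(_ _ (nbhsx_ballx p e e0)) [q [Aq pq]].
by exists q => //; move: pq; rewrite -ball_normE.
Qed.

Section Box.
Variables (R : realType) (n m : nat) (t : 'rV[R]_n) (U : 'M[R]_(m, n)).

Definition contains_box (P : set 'rV[R]_n) (r : R) :=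
  forall c : 'rV[R]_m, `|c| <= r -> P (t + c *m U).

Lemma ri_contains_box (D : set 'rV[R]_n) delta :
  D t -> 0 < delta -> eball t delta `&` aff D `<=` D -> (forall i, D (row i U + t)) ->
  exists2 r, 0 < r & contains_box D r.
Proof.
move=> Dt delta0 riD DU; pose K := \sum_i \sum_j `|U i j|.
have K0 : 0 <= n%:R * K by rewrite mulr_ge0 // sumr_ge0 // => i _; exact: sumr_ge0.
exists (delta / (n%:R * K + 1)) => [|c cr]; first by rewrite divr_gt0 // ltr_wpDl.
apply: riD; split; last exact: aff_add_mulmx.
rewrite /eball /= addrAC subrr add0r; apply: le_lt_trans (enorm_le_mx_norm _) _.
apply: (@le_lt_trans _ _ (n%:R * K * (delta / (n%:R * K + 1)))).
  rewrite -mulrA ler_wpM2l // mulrC; apply: le_trans (mx_norm_mulmx_le _ _) _.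
  by rewrite ler_wpM2r // sumr_ge0 // => i _; exact: sumr_ge0.
by rewrite mulrCA gtr_pMr // ltr_pdivrMr ?ltr_wpDl // mul1r ltrDl.
Qed.

Variable P : set 'rV[R]_n.
Hypothesis P_span : forall y, P y -> (y - t <= U)%MS.

(* Near the corner [t + (c + s) *m U] of the larger box, [P] has a point
   [t + (c + s + w) *m U] with [`|w| < r], and [s + w] has sign pattern [sg]. *)

Lemma convex_contains_box r :
  convex_set P -> 0 < r -> contains_box (closure P) (2 * r) -> contains_box P r.
Proof.
move=> cP r0 clP c cr; pose K := \sum_i \sum_j `|pinvmx U i j|.
have K0 : 0 <= K by rewrite sumr_ge0 // => i _; exact: sumr_ge0.
suff : [set a : 'rV[R]_m | P (a *m U + (t + c *m U))] 0 by rewrite /= mul0mx add0r.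
apply: convex_orthants_mem0 => [|sg].
  by have := convex_set_linear_preimage (f := mulmxr U : {linear 'rV[R]_m -> 'rV[R]_n})
    (convex_set_translate (s := t + c *m U) cP).
pose s : 'rV[R]_m := \row_i (if sg i then r else - r).
pose q := t + (c + s) *m U.
have [y Py qy] : exists2 y, P y & `|q - y| < r / (K + 1).
  apply: closure_norm_approx; first by rewrite divr_gt0 // ltr_wpDl.
  apply: clP; apply: le_trans (ler_normD _ _) _; rewrite mulr2n mulrDl mul1r lerD //.
  apply: mx_norm_le => [|i j]; first exact: ltW.
  by rewrite mxE; case: (sg j); rewrite ?normrN gtr0_norm.
pose w := (y - q) *m pinvmx U.
have wU : w *m U = y - q.
  apply: mulmxKpV; have -> : y - q = (y - t) - (c + s) *m U by rewrite opprD addrA.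
  by rewrite addmx_sub ?eqmx_opp ?submxMl ?P_span.
have wr : `|w| < r.
  apply: le_lt_trans (mx_norm_mulmx_le _ _) _; rewrite distrC.
  apply: (@le_lt_trans _ _ (r / (K + 1) * K)); first exact/ler_wpM2r/ltW.
  by rewrite mulrAC ltr_pdivrMr ?ltr_wpDl // ltr_pM2l // ltrDl.
exists (s + w) => [i|]; last first.
  rewrite /= mulmxDl wU [s *m U + _]addrC -addrA [s *m U + _]addrCA [s *m U + _]addrC.
  by rewrite -mulmxDl subrK.
have := le_lt_trans (mx_norm_coord w ord0 i) wr; rewrite ltr_norml finset.in_setT !mxE.
by case: (sg i) => /andP[wi1 wi2]; lra.
Qed.

Lemma contains_box_reflect r :
  0 < r -> contains_box P r -> forall x, P x -> exists2 lam, 0 < lam & P (t - lam *: (x - t)).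
Proof.
move=> r0 boxP x Px; pose a := (x - t) *m pinvmx U.
have aU : a *m U = x - t by rewrite mulmxKpV ?P_span.
have lam0 : 0 < r / (1 + `|a|) by rewrite divr_gt0 // ltr_pwDl.
exists (r / (1 + `|a|)) => //.
have := boxP (- (r / (1 + `|a|)) *: a); rewrite -scalemxAl aU !scaleNr; apply.
rewrite normrN normrZ gtr0_norm // mulrAC.
by rewrite ler_pdivrMr ?ltr_pwDl // ler_pM2l // lerDr.
Qed.

End Box.

Section Extension.
Variables (R : realType) (n : nat) (E : set ('rV[R]_n * R)).
Hypothesis E_convex : convex_set E.
Hypothesis E_at0 : forall p, E p -> p.1 = 0 -> 0 <= p.2.
Hypothesis E_reflect :
  forall p, E p -> exists2 lam, 0 < lam & exists2 q, E q & q.1 = - (lam *: p.1).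

Definition vanishes_from k (x : 'rV[R]_n) := forall i : 'I_n, (k <= i)%N -> x ord0 i = 0.

Definition subgradient_upto k (xi : 'rV[R]_n) :=
  vanishes_from k xi /\ forall p, E p -> vanishes_from k p.1 -> dotv xi p.1 <= p.2.

Lemma subgradient_upto0 : subgradient_upto 0 0.
Proof.
split => [i _|p Ep p0]; first by rewrite mxE.
rewrite dotv0l; apply: E_at0 => //; apply/rowP => i; rewrite mxE; exact: p0.
Qed.

Section Step.
Variables (k : nat) (kn : (k < n)%N) (xi : 'rV[R]_n).
Hypothesis xi_sub : subgradient_upto k xi.

Let kk := Ordinal kn.
Let slope (p : 'rV[R]_n * R) := (p.2 - dotv xi p.1) / p.1 ord0 kk.
Let Sneg := [set p | [/\ E p, vanishes_from k.+1 p.1 & p.1 ord0 kk < 0]].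
Let Spos := [set p | [/\ E p, vanishes_from k.+1 p.1 & 0 < p.1 ord0 kk]].

Lemma vanishes_fromS x : vanishes_from k.+1 x -> x ord0 kk = 0 -> vanishes_from k x.
Proof.
move=> xk1 xkk i; rewrite leq_eqVlt => /orP[/eqP ik|]; last exact: xk1.
by have -> : i = kk by apply: val_inj.
Qed.

Let slope_le p q : Sneg p -> Spos q -> slope p <= slope q.
Proof.
case=> [Ep vp sp] [Eq vq sq]; rewrite /slope.
set s1 := p.1 ord0 kk in sp *; set s2 := q.1 ord0 kk in sq *.
set g1 := p.2 - dotv xi p.1; set g2 := q.2 - dotv xi q.1.
have s21 : 0 < s2 - s1 by rewrite subr_gt0 (lt_trans sp).
pose t := - s1 / (s2 - s1).
have t01 : 0 <= t <= 1.
  apply/andP; split; first by apply: divr_ge0; rewrite ?oppr_ge0 ltW.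
  by rewrite ler_pdivrMr // mul1r; lra.
have Er := (convex_setP E).1 E_convex q p t Eq Ep t01.
have vr : vanishes_from k (t *: q + (1 - t) *: p).1.
  apply: vanishes_fromS => [i ki|]; first by rewrite !mxE vp // vq // !mulr0 addr0.
  by rewrite !mxE -/s1 -/s2 /t; field; rewrite gt_eqF.
have comb : t * dotv xi q.1 + (1 - t) * dotv xi p.1 <= t * q.2 + (1 - t) * p.2.
  by have := xi_sub.2 _ Er vr; rewrite /= dotvDr !dotvZr.
have key : 0 <= s2 * g1 - s1 * g2.
  have -> : s2 * g1 - s1 * g2 = (s2 - s1) * (t * g2 + (1 - t) * g1).
    by rewrite /t; field; rewrite gt_eqF.
  by apply: mulr_ge0; [exact: ltW | rewrite /g1 /g2; lra].
by rewrite ler_ndivrMr // mulrAC ler_pdivrMr //; lra.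
Qed.

Let Sneg_Spos : slope @` Sneg !=set0 <-> slope @` Spos !=set0.
Proof.
have flip p : E p -> vanishes_from k.+1 p.1 ->
    exists2 q, E q /\ vanishes_from k.+1 q.1 &
      exists2 lam, 0 < lam & q.1 ord0 kk = - (lam * p.1 ord0 kk).
  move=> Ep vp; have [lam lam0 [q Eq q1]] := E_reflect Ep.
  exists q; last by exists lam; rewrite // q1 !mxE.
  by split => // i ki; rewrite q1 !mxE vp // mulr0 oppr0.
by split => -[_ [p [Ep vp sp] _]]; have [q [Eq vq] [lam lam0 qk]] := flip p Ep vp;
  exists (slope q), q => //; split => //; rewrite qk; nra.
Qed.

(* One-dimensional Hahn-Banach step: any [c] between the slopes of [E] to the
   left and to the right of the hyperplane [x_k = 0] is a valid k-th coordinate. *)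
Lemma subgradient_uptoS : exists xi', subgradient_upto k.+1 xi'.
Proof.
have [c [cneg cpos]] : exists c,
    (forall l, (slope @` Sneg) l -> l <= c) /\ (forall u, (slope @` Spos) u -> c <= u).
  by apply: separating_point Sneg_Spos _ => _ _ [p Sp <-] [q Sq <-]; exact: slope_le.
exists (xi + c *: delta_mx ord0 kk); split => [i ki|p Ep vp].
  have ik : i != kk by apply: contraTneq ki => ->; rewrite /= ltnn.
  by rewrite !mxE xi_sub.1 ?(ltnW ki) // eqxx (negbTE ik) mulr0 addr0.
rewrite dotvDl dotvZl dotv_deltal; case: (ltgtP (p.1 ord0 kk) 0) => sk.
- by have := cneg _ (imageP slope (And3 Ep vp sk)); rewrite /slope ler_ndivrMr //; lra.
- by have := cpos _ (imageP slope (And3 Ep vp sk)); rewrite /slope ler_pdivlMr //; lra.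
- by rewrite sk mulr0 addr0; exact: xi_sub.2 Ep (vanishes_fromS vp sk).
Qed.

End Step.

Lemma exists_subgradient0 : exists xi, forall p, E p -> dotv xi p.1 <= p.2.
Proof.
suff /(_ n (leqnn n)) [xi [_ xiE]] : forall k, (k <= n)%N -> exists xi, subgradient_upto k xi.
  by exists xi => p Ep; apply: xiE => // i; rewrite leqNgt ltn_ord.
elim=> [_|k IH kn]; first by exists 0; exact: subgradient_upto0.
by have [xi xi_sub] := IH (ltnW kn); exact: subgradient_uptoS xi_sub.
Qed.

End Extension.

Lemma closure_sub_closed (T : topologicalType) (A B : set T) :
  A `<=` B -> closed B -> closure A `<=` B.
Proof. by move=> AB /closure_id ->; exact: closureS. Qed.

Lemma dom_fineK (R : realType) n (phi : 'rV[R]_n -> \bar R) x :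
  (-oo < phi x)%E -> dom phi x -> (fine (phi x))%:E = phi x.
Proof. by move=> phixNy Dx; rewrite fineK // fin_real // phixNy Dx. Qed.

Section Esubdiff.
Variables (R : realType) (n : nat) (phi : 'rV[R]_n -> \bar R) (xbar : 'rV[R]_n) (f0 : R).
Hypotheses (phi_gtNy : forall x, (-oo < phi x)%E) (phi_xbar : phi xbar = f0%:E).

Lemma esubdiffP eps xi : esubdiff phi eps xbar xi <->
  forall x v, phi x = v%:E -> dotv xi (x - xbar) - eps <= v - f0.
Proof.
split => [sxi x v phix|sxi x]; first by have := sxi x; rewrite phix phi_xbar -EFinB lee_fin.
case phix: (phi x) => [v| |]; first by rewrite phi_xbar -EFinB lee_fin; exact: sxi.
  by rewrite phi_xbar leey.
by have := phi_gtNy x; rewrite phix.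
Qed.

Lemma esubdiff_mono eps1 eps2 :
  eps1 <= eps2 -> esubdiff phi eps1 xbar `<=` esubdiff phi eps2 xbar.
Proof. by move=> eps12 xi /esubdiffP sxi; apply/esubdiffP => x v /sxi; lra. Qed.

Lemma closed_esubdiff eps : closed (esubdiff phi eps xbar).
Proof.
apply/closure_id; rewrite eqEsubset; split; first exact: subset_closure.
move=> xi clxi; apply/esubdiffP => x v phix.
suff : [set z | dotv (x - xbar) z <= v - f0 + eps] xi by rewrite /= dotvC; lra.
apply: closure_sub_closed clxi; last exact: closed_dotv_le.
by move=> z /esubdiffP/(_ x v phix); rewrite /= dotvC; lra.
Qed.

Lemma convex_esubdiff eps : convex_set (esubdiff phi eps xbar).
Proof.
apply/convex_setP => z1 z2 t /esubdiffP s1 /esubdiffP s2 /andP[t0 t1].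
apply/esubdiffP => x v phix; have := s1 x v phix; have := s2 x v phix.
rewrite dotvDl !dotvZl; nra.
Qed.

Lemma subdiff_bigcap :
  subdiff phi xbar = \bigcap_(e in [set e : R | 0 < e]) esubdiff phi e xbar.
Proof.
apply/seteqP; split => [xi sxi e /ltW e0|xi sxi]; first exact: esubdiff_mono sxi.
apply/esubdiffP => x v phix; apply/ler_addgt0Pr => e e0.
by have /esubdiffP/(_ x v phix) := sxi e e0; lra.
Qed.

End Esubdiff.

Section NearlyConvex.
Variables (R : realType) (n : nat) (phi : 'rV[R]_n -> \bar R) (xbar : 'rV[R]_n).
Variable E : set ('rV[R]_n * R).
Hypotheses (E_convex : convex_set E) (E_epi : E `<=` epi phi) (epi_E : epi phi `<=` closure E).
Hypotheses (phi_gtNy : forall x, (-oo < phi x)%E) (ri_xbar : ri (dom phi) xbar).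

Let proj_dom : fst @` E `<=` dom phi.
Proof. by move=> _ [[x a] /E_epi epix <-]; apply: le_lt_trans epix (ltry _). Qed.

Let dom_proj : dom phi `<=` closure (fst @` E).
Proof.
move=> x Dx; have /epi_E : epi phi (x, fine (phi x)) by rewrite /epi /= dom_fineK ?phi_gtNy.
apply: (closure_sub_closed (B := [set p | closure (fst @` E) p.1])) => [p Ep|].
  exact/subset_closure/imageP.
exact: (preimage_closed (f := fst) (fun p _ => cvg_fst) (@closed_closure _ _)).
Qed.

Let convex_proj : convex_set (fst @` E).
Proof.
apply/convex_setP => _ _ t [p Ep <-] [q Eq <-] t01.
by exists (t *: p + (1 - t) *: q) => //; exact: (convex_setP E).1.
Qed.

Lemma proj_reflect p : E p ->
  exists2 lam, 0 < lam & exists2 q, E q & q.1 = xbar - lam *: (p.1 - xbar).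
Proof.
case: ri_xbar => Dxbar [delta [delta0 riD]].
have [m [U [DU spanU]]] := exists_row_span [set s | dom phi (s + xbar)].
have P_span y : (fst @` E) y -> (y - xbar <= U)%MS.
  by move=> /proj_dom Dy; apply: spanU; rewrite /= subrK.
have [r r0 boxD] := ri_contains_box Dxbar delta0 riD DU.
have r20 : 0 < r / 2 by rewrite divr_gt0.
have boxP : contains_box xbar U (fst @` E) (r / 2).
  apply: (convex_contains_box P_span convex_proj r20).
  by rewrite mulrC divfK ?pnatr_eq0 // => c /boxD /dom_proj.
move=> Ep; have [lam lam0 [q Eq q1]] := contains_box_reflect P_span r20 boxP (imageP fst Ep).
by exists lam => //; exists q.
Qed.

Lemma nearly_convex_subdiff_neq0 : subdiff phi xbar !=set0.
Proof.
have phi_xbar := esym (dom_fineK (phi_gtNy xbar) ri_xbar.1).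
set f0 := fine (phi xbar) in phi_xbar.
pose s : 'rV[R]_n * R := (xbar, f0).
have [xi xiE] : exists xi, forall p, E (p + s) -> dotv xi p.1 <= p.2.
  apply: (@exists_subgradient0 _ _ [set p | E (p + s)]) => [|p Ep p0|p Ep].
  - exact: convex_set_translate.
  - by have := E_epi Ep; rewrite /epi /= p0 add0r phi_xbar lee_fin; lra.
  - have [lam lam0 [q Eq q1]] := proj_reflect Ep; exists lam => //.
    by exists (q - s); rewrite /= ?subrK // q1 addrK addrAC subrr add0r.
exists xi; apply/(esubdiffP phi_gtNy phi_xbar) => x v phix.
have sub : E `<=` [set p | dotv xi p.1 - p.2 <= dotv xi xbar - f0].
  by move=> p Ep; have := xiE (p - s); rewrite subrK dotvBr => /(_ Ep) /=; lra.
have /(closure_sub_closed sub (@closed_dotv_fst_le _ _ xi _)) /= : closure E (x, v).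
  by apply: epi_E; rewrite /epi /= phix.
by rewrite subr0 dotvBr; lra.
Qed.

End NearlyConvex.

Theorem mainTheorem2 (R : realType) (n : nat) (phi : 'rV[R]_n -> \bar R)
  (eps : R) (xbar : 'rV[R]_n) :
  proper_fun phi -> nearly_convex_fun phi -> 0 <= eps ->
  ri (dom phi) xbar ->
  [/\ esubdiff phi eps xbar !=set0,
      closed (esubdiff phi eps xbar),
      convex_set (esubdiff phi eps xbar)
    & subdiff phi xbar = \bigcap_(e in [set e : R | 0 < e]) esubdiff phi e xbar].
Proof.
move=> [_ phi_gtNy] [E [E_convex [E_epi epi_E]]] eps0 ri_xbar.
have phi_xbar := esym (dom_fineK (phi_gtNy xbar) ri_xbar.1).
split.
- have [xi sxi] := nearly_convex_subdiff_neq0 E_convex E_epi epi_E phi_gtNy ri_xbar.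
  by exists xi; exact: (esubdiff_mono phi_gtNy phi_xbar eps0 sxi).
- exact: (closed_esubdiff phi_gtNy phi_xbar).
- exact: (convex_esubdiff phi_gtNy phi_xbar).
- exact: (subdiff_bigcap phi_gtNy phi_xbar).
Qed.
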